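(* There is some $d_0$ such that the following holds for every $d\geq d_0$. Let $G$ be a finite bipartite graph with vertex classes $A$ and $B$ such that $|A|\geq |B|$, $d_G(x,y)\leq d^{1/5}$ for all distinct $x,y\in B$, $d_G(x)\leq d$ for every $x\in A$, and $d(G)\geq d^{3/4}$. Then $G$ contains a $C_4$-free subgraph with average degree at least $d^{1/4}$.
   Context: $d(G)=2e(G)/|V(G)|$ is the average degree; $d_G(x)$ is the degree of $x$; the codegree $d_G(x,y)$ is the number of common neighbours of $x$ and $y$ in $G$. A graph is $C_4$-free if it contains no $4$-cycle as a subgraph. *)

From HB Require Import structures.
From mathcomp Require Import all_boot all_order all_algebra.
From mathcomp Require Import all_classical all_reals all_analysis.
Set Implicit Arguments. Unset Strict Implicit. Unset Printing Implicit Defensive.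
Import Order.TTheory GRing.Theory Num.Theory.

Definition simple_graph (T : finType) (adj : rel T) : Prop :=
  symmetric adj /\ irreflexive adj.

Definition bipartite_with (T : finType) (adj : rel T) (A B : {set T}) : Prop :=
  A :&: B = finset.set0 /\ A :|: B = [set: T] /\
  (forall x y, adj x y -> (x \in A) && (y \in B) || (x \in B) && (y \in A)).

Definition deg (T : finType) (adj : rel T) (x : T) : nat :=
  #|[set z | adj x z]|.

Definition codeg (T : finType) (adj : rel T) (x y : T) : nat :=
  #|[set z | adj x z && adj y z]|.

(* Average degree 2 e(H) / |V(H)| of the graph with vertex set S and
   adjacency relation adj (edges assumed inside S); 2 e(H) is the number of
   ordered adjacent pairs. Equals 0 when S is empty. *)
Definition avg_deg (R : realType) (T : finType) (S : {set T}) (adj : rel T) : R :=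
  (#|[set p : T * T | adj p.1 p.2]|%:R / #|S|%:R)%R.

Definition subgraph (T : finType) (adj : rel T) (S : {set T}) (F : rel T) : Prop :=
  symmetric F /\ (forall x y, F x y -> [&& adj x y, x \in S & y \in S]).

Definition C4_free (T : finType) (F : rel T) : Prop :=
  forall a b c d : T, uniq [:: a; b; c; d] ->
    ~ [&& F a b, F b c, F c d & F d a].

From HB Require Import structures.
From mathcomp Require Import all_boot all_order all_algebra.
From mathcomp Require Import all_classical all_reals all_analysis.
From mathcomp Require Import ring lra.
Import Order.TTheory GRing.Theory Num.Theory.
Local Open Scope ring_scope.
Set Implicit Arguments. Unset Strict Implicit. Unset Printing Implicit Defensive.

(* Orient every edge of G from A to B and keep each arc independently with
   probability p = d^(-2/5) / 2.  A 4-cycle of G is a "rectangle" {a, c} x {b, d}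
   of arcs; the degree and codegree bounds allow at most d^(6/5) e(G) of them, so
   the expected number p^4 d^(6/5) e(G) of surviving rectangles is at most an
   eighth of the expected number p e(G) of surviving arcs.  Deleting one arc from
   every surviving rectangle leaves a C4-free graph with at least (7/8) p e(G)
   edges, i.e. of average degree at least (7/32) d^(7/20) >= d^(1/4). *)

Lemma natr_card_sep (R : pzSemiRingType) (I : finType) (A : {pred I}) (P : pred I) :
  #|[set i in A | P i]|%:R = \sum_(i in A) (P i)%:R :> R.
Proof.
rewrite -sum1_card natr_sum (eq_bigl (fun i => (i \in A) && P i)) => [|i].
  by rewrite big_mkcondr; apply: eq_bigr => i _; case: (P i).
by rewrite inE.
Qed.

Lemma prod_natr_bool (R : comPzSemiRingType) (I : finType) (A : {pred I}) (P : pred I) :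
  \prod_(i in A) (P i)%:R = [forall i in A, P i]%:R :> R.
Proof.
case: (boolP [forall i in A, P i]) => [/forall_inP allP | /forall_inPn [i iA nPi]].
  by rewrite big1 // => i /allP ->.
by rewrite (bigD1 i) //= (negbTE nPi) mul0r.
Qed.

Lemma leq_card_bigcup (I T : finType) (P : pred I) (F : I -> {set T}) :
  (#|\bigcup_(i | P i) F i| <= \sum_(i | P i) #|F i|)%N.
Proof.
apply: (big_ind2 (fun (S : {set T}) n => #|S| <= n)%N) => [|S1 n1 S2 n2 le1 le2|//].
  by rewrite cards0.
exact: leq_trans (leq_card_setU S1 S2).1 (leq_add le1 le2).
Qed.

Section BernoulliSample.
Variables (R : realDomainType) (K : finType) (p : R).

Definition bweight (f : {ffun K -> bool}) : R :=
  \prod_(e : K) (if f e then p else 1 - p).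

Definition expect (V : {ffun K -> bool} -> R) : R := \sum_f bweight f * V f.

Lemma eq_expect V W : V =1 W -> expect V = expect W.
Proof. by move=> eqVW; apply: eq_bigr => f _; rewrite eqVW. Qed.

Lemma expect_prod (Q : {set K}) :
  expect (fun f => \prod_(e in Q) (f e)%:R) = p ^+ #|Q|.
Proof.
rewrite /expect /= -prodr_const.
under eq_bigr => f _ do
  rewrite /bweight [X in _ * X]big_mkcond -big_split /=.
rewrite -(bigA_distr_bigA (fun e (b : bool) =>
  (if b then p else 1 - p) * (if e \in Q then b%:R else 1))) /=.
rewrite [RHS]big_mkcond; apply: eq_bigr => e _.
by rewrite big_bool /=; case: (e \in Q); rewrite ?mulr1 ?mulr0 ?addr0 // addrC subrK.
Qed.

Lemma expect_coord e : expect (fun f => (f e)%:R) = p.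
Proof.
rewrite -[RHS]expr1 -(cards1 e) -expect_prod.
by apply: eq_bigr => f _; rewrite big_set1.
Qed.

Lemma sum_bweight : \sum_f bweight f = 1.
Proof.
have := expect_prod finset.set0; rewrite cards0 expr0 /expect /= => <-.
by apply: eq_bigr => f _; rewrite big_set0 mulr1.
Qed.

Lemma expectB V W : expect (fun f => V f - W f) = expect V - expect W.
Proof. by rewrite /expect -sumrB; apply: eq_bigr => f _; rewrite mulrBr. Qed.

Lemma expect_sum (I : finType) (P : pred I) (V : I -> {ffun K -> bool} -> R) :
  expect (fun f => \sum_(i | P i) V i f) = \sum_(i | P i) expect (V i).
Proof.
rewrite /expect exchange_big /=.
by apply: eq_bigr => f _; rewrite big_distrr.
Qed.

Hypothesis p01 : 0 <= p <= 1.

Lemma bweight_ge0 f : 0 <= bweight f.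
Proof.
case/andP: p01 => p0 p1; apply: prodr_ge0 => e _.
by case: (f e); rewrite ?subr_ge0.
Qed.

Lemma exists_ge_expect V : exists f, expect V <= V f.
Proof.
have [f _ fmax] := @arg_maxP _ _ _ [ffun=> false] predT V isT.
exists f; apply: le_trans (_ : \sum_g bweight g * V f <= _).
  apply: ler_sum => g _; apply: ler_wpM2l; first exact: bweight_ge0.
  exact: fmax.
by rewrite -big_distrl /= sum_bweight mul1r.
Qed.

End BernoulliSample.

Section Rectangles.
Variable T : finType.
Implicit Types (X Y : {set T * T}) (t : (T * T) * (T * T)).

Definition corners t : {set T * T} :=
  [set x in [:: t.1; (t.1.1, t.2.2); (t.2.1, t.1.2); t.2]].

Definition rect X t : bool :=
  [&& t.1.1 != t.2.1, t.1.2 != t.2.2 & corners t \subset X].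

Definition rects X : {set (T * T) * (T * T)} := [set t | rect X t].

Lemma rectS X Y t : X \subset Y -> rect X t -> rect Y t.
Proof.
by move=> sXY /and3P[ac bd sub]; rewrite /rect ac bd (fintype.subset_trans sub sXY).
Qed.

Lemma card_corners t : t.1.1 != t.2.1 -> t.1.2 != t.2.2 -> #|corners t| = 4%N.
Proof.
move: t => [[a b] [c d]] /= ac bd; rewrite cardsE; apply/card_uniqP.
by rewrite /= !inE !xpair_eqE (negbTE ac) (negbTE bd) /= !andbF.
Qed.

(* Witness: remove from X the first corner of every rectangle of X. *)
Lemma rect_free_subset X :
  exists2 Y : {set T * T}, Y \subset X &
    rects Y = finset.set0 /\ (#|X| <= #|Y| + #|rects X|)%N.
Proof.
set C := [set t.1 | t in rects X]; exists (X :\: C); first exact: subsetDl.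
split.
  apply/setP => t; rewrite !inE; apply/negP => rect_t.
  have t1_corner : t.1 \in corners t by rewrite !inE eqxx.
  move: (rect_t) => /and3P[_ _ /fintype.subsetP/(_ _ t1_corner)].
  by rewrite inE imset_f // inE (rectS (subsetDl X C) rect_t).
rewrite -(cardsID C X) addnC leq_add2l.
exact: leq_trans (subset_leq_card (subsetIr X C)) (leq_imset_card _ _).
Qed.

End Rectangles.

Section RandomSubset.
Variables (R : realDomainType) (T : finType) (p : R) (E : {set T * T}).

Definition sample (f : {ffun T * T -> bool}) : {set T * T} := [set e in E | f e].

Lemma sample_sub f : sample f \subset E.
Proof. by apply/fintype.subsetP => e; rewrite inE => /andP[]. Qed.

Lemma rect_sample f t :
  rect (sample f) t = rect E t && [forall e in corners t, f e].
Proof.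
rewrite /rect /sample setIdE finset.subsetI !andbA; congr (_ && _).
by apply/fintype.subsetP/forall_inP => sub e /sub; rewrite inE.
Qed.

Lemma expect_card_sample :
  expect p (fun f => #|sample f|%:R) = p * #|E|%:R.
Proof.
under eq_expect => f do rewrite natr_card_sep.
by rewrite expect_sum (eq_bigr _ (fun e _ => expect_coord p e))
  sumr_const mulr_natr.
Qed.

Lemma expect_card_rects_sample :
  expect p (fun f => #|rects (sample f)|%:R) = p ^+ 4 * #|rects E|%:R.
Proof.
have rects_sample f :
    rects (sample f) = [set t in rects E | [forall e in corners t, f e]].
  by apply/setP => t; rewrite !inE rect_sample.
under eq_expect => f do
  rewrite rects_sample natr_card_sep (eq_bigr _ (fun t _ => esym (prod_natr_bool _ _ _))).
rewrite expect_sum (eq_bigr (fun _ => p ^+ 4)) ?sumr_const ?mulr_natr //.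
by move=> t; rewrite inE => /and3P[ac bd _]; rewrite expect_prod card_corners.
Qed.

End RandomSubset.

Lemma exists_large_rect_free (R : realDomainType) (T : finType) (p : R)
    (E : {set T * T}) : 0 <= p <= 1 ->
  exists2 X : {set T * T}, X \subset E &
    rects X = finset.set0 /\ p * #|E|%:R - p ^+ 4 * #|rects E|%:R <= #|X|%:R.
Proof.
move=> p01.
have [f] := exists_ge_expect p01 (fun f => #|sample E f|%:R - #|rects (sample E f)|%:R).
rewrite expectB expect_card_sample expect_card_rects_sample => ge_expect.
have [X sXS [rectsX0 cardS]] := rect_free_subset (sample E f).
exists X; first exact: fintype.subset_trans sXS (sample_sub E f).
split=> //; apply: le_trans ge_expect _.
by rewrite lerBlDr -natrD ler_nat.
Qed.

Section RectangleCount.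
Variables (T : finType) (E : {set T * T}).

Definition out_nbhd a : {set T} := [set d | (a, d) \in E].
Definition common_in b d : {set T} := [set c | ((c, b) \in E) && ((c, d) \in E)].

Lemma card_rects_fibers :
  #|rects E| = (\sum_(u in E) #|[set v | rect E (u, v)]|)%N.
Proof.
rewrite /rects -sum1dep_card.
rewrite (eq_bigl (fun t => (t.1 \in E) && rect E (t.1, t.2))) => [|[u v]].
  rewrite -(pair_big_dep (mem E) (fun u v => rect E (u, v)) (fun _ _ => 1%N)).
  by apply: eq_bigr => u _; rewrite sum1dep_card.
rewrite andb_idl // => /and3P[_ _ /fintype.subsetP]; apply.
by rewrite !inE eqxx.
Qed.

Lemma card_rects_fiber a b :
  (#|[set v | rect E ((a, b), v)]| <= \sum_(d in out_nbhd a :\ b) #|common_in b d|)%N.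
Proof.
have fiber_sub : [set v | rect E ((a, b), v)] \subset
    \bigcup_(d in out_nbhd a :\ b) [set (c, d) | c in common_in b d].
  apply/fintype.subsetP => -[c d].
  rewrite inE => /and3P[/= _ bd /fintype.subsetP sub].
  apply/bigcupP; exists d.
    by rewrite !inE eq_sym bd sub // !inE eqxx !orbT.
  by apply: imset_f; rewrite inE !sub // !inE eqxx !orbT.
apply: leq_trans (subset_leq_card fiber_sub) _.
apply: leq_trans (leq_card_bigcup _ _) _.
by apply: leq_sum => d _; apply: leq_imset_card.
Qed.

Lemma card_rects_le (R : numDomainType) (D q : R) : 0 <= q ->
    (forall a b, (a, b) \in E -> #|out_nbhd a|%:R <= D) ->
    (forall a b d, (a, b) \in E -> (a, d) \in E -> b != d -> #|common_in b d|%:R <= q) ->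
  #|rects E|%:R <= D * q * #|E|%:R.
Proof.
move=> q0 out_le common_le.
rewrite card_rects_fibers natr_sum mulr_natr -sumr_const; apply: ler_sum => -[a b] abE.
apply: le_trans (_ : (\sum_(d in out_nbhd a :\ b) #|common_in b d|)%:R <= _).
  by rewrite ler_nat card_rects_fiber.
rewrite natr_sum; apply: le_trans (_ : \sum_(d in out_nbhd a :\ b) q <= _).
  apply: ler_sum => d; rewrite !inE => /andP[db ad].
  by apply: common_le abE ad _; rewrite eq_sym.
rewrite sumr_const -mulr_natr mulrC ler_wpM2r //.
apply: le_trans (out_le _ _ abE); rewrite ler_nat subset_leq_card //.
exact: finset.subsetDl.
Qed.

End RectangleCount.

Section BipartiteArcs.
Variables (T : finType) (adj : rel T) (A B : {set T}).
Hypotheses (adj_sym : symmetric adj) (AB : bipartite_with adj A B).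

Definition arcs : {set T * T} := [set e | (e.1 \in A) && adj e.1 e.2].

Lemma notin_BA x : x \in B -> x \notin A.
Proof.
case: AB => AB0 _ xB; apply/negP => xA.
by have := finset.in_set0 x; rewrite -AB0 inE xA xB.
Qed.

Lemma adj_AB x y : x \in A -> adj x y -> y \in B.
Proof.
case: AB => _ [_ adjAB] xA /adjAB /orP[/andP[_ //]|/andP[xB _]].
by move: (notin_BA xB); rewrite xA.
Qed.

Lemma adj_BA x y : x \in B -> adj x y -> y \in A.
Proof.
case: AB => _ [_ adjAB] xB /adjAB /orP[/andP[xA _]|/andP[_ //]].
by move: (notin_BA xB); rewrite xA.
Qed.

Lemma arcsP x y : (x, y) \in arcs -> [/\ x \in A, y \in B & adj x y].
Proof. by rewrite inE => /andP[xA xy]; rewrite xA xy (adj_AB xA xy). Qed.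

Lemma card_adj_pairs_le : (#|[set e : T * T | adj e.1 e.2]| <= 2 * #|arcs|)%N.
Proof.
pose swap (e : T * T) := (e.2, e.1).
have swapK : involutive swap by case.
have sub : [set e : T * T | adj e.1 e.2] \subset arcs :|: swap @: arcs.
  apply/fintype.subsetP => -[x y]; rewrite !inE /= => xy.
  case: AB => _ [AB1 _]; have := finset.in_setT x; rewrite -AB1 inE => /orP[xA|xB].
    by rewrite xA xy.
  apply/orP; right; rewrite -[(x, y)]/(swap (y, x)) imset_f // inE /=.
  by rewrite (adj_BA xB xy) adj_sym.
apply: leq_trans (subset_leq_card sub) _.
rewrite cardsU card_imset; last exact: inv_inj.
by rewrite mul2n -addnn leq_subr.
Qed.

Lemma card_rects_arcs_le (R : numDomainType) (D q : R) : 0 <= q ->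
    (forall x y, x \in B -> y \in B -> x != y -> (codeg adj x y)%:R <= q) ->
    (forall x, x \in A -> (deg adj x)%:R <= D) ->
  #|rects arcs|%:R <= D * q * #|arcs|%:R.
Proof.
move=> q0 codeg_le deg_le; apply: card_rects_le => //.
  move=> a b /arcsP[aA _ _]; apply: le_trans (deg_le a aA).
  rewrite ler_nat subset_leq_card //; apply/fintype.subsetP => d.
  by rewrite !inE => /andP[].
move=> a b d /arcsP[_ bB _] /arcsP[_ dB _] bd.
apply: le_trans (codeg_le b d bB dB bd).
rewrite ler_nat subset_leq_card //; apply/fintype.subsetP => c.
by rewrite !inE => /andP[/andP[_ cb] /andP[_ cd]]; rewrite (adj_sym b) (adj_sym d) cb cd.
Qed.

End BipartiteArcs.

Section SymmetricClosure.
Variables (T : finType) (X : {set T * T}).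

Definition sym_closure : rel T := fun x y => ((x, y) \in X) || ((y, x) \in X).

Lemma sym_closure_subgraph (adj : rel T) : symmetric adj ->
  (forall x y, (x, y) \in X -> adj x y) -> subgraph adj [set: T] sym_closure.
Proof.
move=> adj_sym Xadj; split=> [x y|x y /orP[/Xadj|/Xadj]]; first exact: orbC.
  by rewrite !inE !andbT.
by rewrite adj_sym !inE !andbT.
Qed.

Lemma card_sym_closure : (#|X| <= #|[set e : T * T | sym_closure e.1 e.2]|)%N.
Proof.
apply: subset_leq_card; apply/fintype.subsetP => -[x y] xy.
by rewrite inE /sym_closure /= xy.
Qed.

(* A 4-cycle alternates between A and its complement, so its four edges,
   oriented out of A, form a rectangle of X. *)
Lemma sym_closure_C4_free (A : {set T}) :
    (forall x y, (x, y) \in X -> (x \in A) && (y \notin A)) ->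
  rects X = finset.set0 -> C4_free sym_closure.
Proof.
move=> XA rectsX0 a b c d.
rewrite /= !inE => /and4P[/norP[_ /norP[ac _]] /norP[_ bd] _ _] /and4P[ab bc cd da].
have no_rect t : rect X t -> False.
  by move=> rect_t; have := finset.in_set0 t; rewrite -rectsX0 inE rect_t.
have arc_out x y : x \in A -> sym_closure x y -> ((x, y) \in X) && (y \notin A).
  move=> xA /orP[xy|yx]; first by rewrite xy (andP (XA _ _ xy)).2.
  by have /andP[_] := XA _ _ yx; rewrite xA.
have arc_in x y : x \notin A -> sym_closure x y -> ((y, x) \in X) && (y \in A).
  move=> xA /orP[xy|yx]; last by rewrite yx (andP (XA _ _ yx)).1.
  by have /andP[] := XA _ _ xy; rewrite (negbTE xA).
case: (boolP (a \in A)) => aA.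
  have /andP[ab' bA] := arc_out _ _ aA ab; have /andP[cb cA] := arc_in _ _ bA bc.
  have /andP[cd' dA] := arc_out _ _ cA cd; have /andP[ad _] := arc_in _ _ dA da.
  apply: (no_rect ((a, b), (c, d))); rewrite /rect /= ac bd.
  by apply/fintype.subsetP => e; rewrite !inE => /or4P[] /eqP->.
have /andP[ba bA] := arc_in _ _ aA ab; have /andP[bc' cA] := arc_out _ _ bA bc.
have /andP[dc dA] := arc_in _ _ cA cd; have /andP[da' _] := arc_out _ _ dA da.
apply: (no_rect ((b, a), (d, c))); rewrite /rect /= bd ac.
by apply/fintype.subsetP => e; rewrite !inE => /or4P[] /eqP->.
Qed.

End SymmetricClosure.

(* With [p = 1 / (2 r^8)] the expected number of rectangles [p^4 c] is at most
   an eighth of the expected number of edges [p e]. *)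
Lemma deletion_bound (R : realFieldType) (r n e c x : R) :
    3 <= r -> 0 <= n -> r ^+ 15 * n <= 2 * e -> c <= r ^+ 24 * e ->
    (2 * r ^+ 8)^-1 * e - ((2 * r ^+ 8)^-1) ^+ 4 * c <= x ->
  r ^+ 5 * n <= x.
Proof.
move=> r3 n0 ne ce; set p := (2 * r ^+ 8)^-1 => ex.
have r0 : 0 < r by lra.
have p0 : 0 < p by rewrite invr_gt0 mulr_gt0 // exprn_gt0.
have e_ge : r ^+ 7 * n <= 4 * (p * e).
  have -> : r ^+ 7 * n = 2 * p * (r ^+ 15 * n) by rewrite /p; field; rewrite lt0r_neq0.
  have -> : 4 * (p * e) = 2 * p * (2 * e) by ring.
  by rewrite ler_wpM2l // mulr_ge0 // ltW.
have c_le : p ^+ 4 * c <= p * e / 8.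
  have -> : p * e / 8 = p ^+ 4 * (r ^+ 24 * e).
    by rewrite /p; field; rewrite lt0r_neq0.
  by rewrite ler_pM2l // exprn_gt0.
have r5n0 : 0 <= r ^+ 5 * n by rewrite mulr_ge0 // exprn_ge0 // ltW.
have r2n : 9 * (r ^+ 5 * n) <= r ^+ 7 * n.
  have -> : r ^+ 7 * n = r ^+ 2 * (r ^+ 5 * n) by ring.
  by apply: ler_wpM2r; rewrite // expr2; nra.
lra.
Qed.

Lemma C4_free_subgraph_of_pow_bounds (R : realType) (r : R) (T : finType) (adj : rel T)
    (A B : {set T}) :
    3 <= r -> simple_graph adj -> bipartite_with adj A B ->
    (forall x y, x \in B -> y \in B -> x != y -> (codeg adj x y)%:R <= r ^+ 4) ->
    (forall x, x \in A -> (deg adj x)%:R <= r ^+ 20) ->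
    r ^+ 15 <= avg_deg R [set: T] adj ->
  exists (S : {set T}) (F : rel T),
    subgraph adj S F /\ C4_free F /\ r ^+ 5 <= avg_deg R S F.
Proof.
move=> r3 [adj_sym _] AB codeg_le deg_le avg_ge.
have p01 : 0 <= (2 * r ^+ 8)^-1 <= 1.
  have r8 : 1 <= r ^+ 8 by rewrite exprn_ege1 //; lra.
  by rewrite invr_ge0 invf_le1; lra.
have [X sXarcs [rectsX0 X_ge]] := exists_large_rect_free (arcs adj A) p01.
have Xarcs x y : (x, y) \in X -> [/\ x \in A, y \in B & adj x y].
  by move=> /(fintype.subsetP sXarcs) /arcsP; apply.
exists [set: T], (sym_closure X); split; [|split].
- by apply: sym_closure_subgraph => // x y /Xarcs[].
- apply: (sym_closure_C4_free (A := A)) rectsX0 => x y /Xarcs[xA yB _].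
  by rewrite xA (notin_BA AB yB).
have n_gt0 : 0 < #|[set: T]|%:R :> R.
  rewrite ltr0n lt0n; apply: contraTneq avg_ge => n0.
  by rewrite /avg_deg n0 invr0 mulr0 -ltNge exprn_gt0 //; lra.
move: avg_ge; rewrite /avg_deg !ler_pdivlMr // => avg_ge.
apply: le_trans (_ : #|X|%:R <= _); last by rewrite ler_nat card_sym_closure.
apply: (deletion_bound r3 (ltW n_gt0) _ _ X_ge).
  by apply: le_trans avg_ge _; rewrite -natrM ler_nat (card_adj_pairs_le adj_sym AB).
rewrite (_ : 24 = 20 + 4)%N // exprD.
by rewrite (card_rects_arcs_le adj_sym AB) ?exprn_ge0 //; lra.
Qed.

Theorem lemma6 (R : realType) :
  exists d0 : R, forall d : R, d0 <= d ->
  forall (T : finType) (adj : rel T) (A B : {set T}),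
    simple_graph adj ->
    bipartite_with adj A B ->
    (#|B| <= #|A|)%N ->
    (forall x y, x \in B -> y \in B -> x != y -> (codeg adj x y)%:R <= d `^ (1/5)) ->
    (forall x, x \in A -> (deg adj x)%:R <= d) ->
    d `^ (3/4) <= avg_deg R [set: T] adj ->
    exists (S : {set T}) (F : rel T),
      subgraph adj S F /\ C4_free F /\ d `^ (1/4) <= avg_deg R S F.
Proof.
exists (3 ^+ 20) => d d_ge T adj A B G AB _ codeg_le deg_le avg_ge.
have d0 : 0 <= d by apply: le_trans d_ge; rewrite exprn_ge0.
set r := d `^ (1/20).
have pow_r k : d `^ (k%:R / 20) = r ^+ k.
  by rewrite /r -powR_mulrn ?powR_ge0 // -powRrM mul1r mulrC.
have e4 : d `^ (1/5) = r ^+ 4 by rewrite -pow_r; congr (_ `^ _); field.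
have e5 : d `^ (1/4) = r ^+ 5 by rewrite -pow_r; congr (_ `^ _); field.
have e15 : d `^ (3/4) = r ^+ 15 by rewrite -pow_r; congr (_ `^ _); field.
have e20 : d = r ^+ 20 by rewrite -pow_r divff ?powRr1.
have r3 : 3 <= r by rewrite -(ler_pXn2r (n := 20)) ?nnegrE ?powR_ge0 //= -e20.
rewrite e5; apply: (C4_free_subgraph_of_pow_bounds r3 G AB).
- by rewrite -e4.
- by rewrite -e20.
- by rewrite -e15.
Qed.
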